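(* Let $G$ be a graph without isolated vertices, $S$ a DDS of $G$, and $u\in\widehat S$ with $P_S(u)\neq\emptyset$. Let $v_u\in P_S(u)$, and let $P'=\{v\in P_S(u): o_S(v)\le o_S(v_u)\}$. Then: (1) $S^1$ is a dominating sequence of $G$; (2) $S_{u\to v_u}$ is a DDS of $G$ and $\widehat{S_{u\to v_u}}=\widehat S$; (3) if $S$ is a GDDS of $G$, then so is $S_{u\to v_u}$; (4) $P'\cup(\widehat{S^1}\setminus\{u\})\subseteq\widehat{(S_{u\to v_u})^1}$.
   Context: Graphs are finite, simple, undirected; $N[v]$ closed neighborhood. A sequence $S=(v_1,\dots,v_k)$ of distinct vertices is a double neighborhood sequence (DNS) if for each $i$ some $w\in N[v_i]$ satisfies $|\{j<i:w\in N[v_j]\}|\le1$; a DDS if moreover its vertex set $D$ satisfies $|N[w]\cap D|\ge2$ for all $w$; a GDDS is a DDS of maximum length. A sequence is legal if $N[v_i]\setminus\bigcup_{j<i}N[v_j]\neq\emptyset$ for all $i\ge2$, and a dominating sequence if moreover its vertex set is a dominating set. $\widehat S$ is the vertex set of $S$, $o_S(v_i)=i$ its position. $N_S^1[v_i]=N[v_i]\setminus\bigcup_{j<i}N[v_j]$, $N_S^2[v_i]=\{w\in N[v_i]:|\{j<i:w\in N[v_j]\}|=1\}$. $S^1$ is the subsequence of $S$ of vertices $v$ with $N_S^1[v]\neq\emptyset$; $S^2$ the subsequence of the remaining ones. For $u\in\widehat{S^1}$, $P_S(u)=\{v\in\widehat{S^2}: N_S^1[u]\cap N_S^2[v]\neq\emptyset\}$.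 For $u,v\in\widehat S$ with $o_S(u)<o_S(v)$, $S_{u\to v}$ is the sequence obtained from $S$ by removing $u$ and reinserting it immediately after $v$. *)

From mathcomp Require Import all_boot.
Set Implicit Arguments. Unset Strict Implicit. Unset Printing Implicit Defensive.

Section Graph.
Variables (T : finType) (e : rel T).

Definition no_isolated := forall v : T, exists w, e v w.

Definition Nc (v : T) : {set T} := [set w | (w == v) || e v w].

Definition cnt (s : seq T) (w : T) : nat := count (fun x => w \in Nc x) s.

Definition is_DNS (S : seq T) : Prop :=
  uniq S /\
  forall s1 v s2, S = s1 ++ v :: s2 -> exists2 w, w \in Nc v & cnt s1 w <= 1.

Definition vset (S : seq T) : {set T} := [set x in S].

Definition is_DDS (S : seq T) : Prop :=
  is_DNS S /\ forall w : T, 2 <= #|Nc w :&: vset S|.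

Definition is_GDDS (S : seq T) : Prop :=
  is_DDS S /\ forall S' : seq T, is_DDS S' -> size S' <= size S.

Definition is_dominating (D : {set T}) : Prop :=
  forall w : T, exists2 x, x \in D & w \in Nc x.

Definition is_legal (S : seq T) : Prop :=
  uniq S /\
  forall s1 v s2, S = s1 ++ v :: s2 -> s1 != [::] ->
    Nc v :\: \bigcup_(x <- s1) Nc x != set0.

Definition is_dominating_seq (S : seq T) : Prop :=
  is_legal S /\ is_dominating (vset S).

(* o_S(v) = index v S (0-based); the prefix of S before v *)
Definition pre (S : seq T) (v : T) : seq T := take (index v S) S.

Definition N1 (S : seq T) (v : T) : {set T} :=
  Nc v :\: \bigcup_(x <- pre S v) Nc x.

Definition N2 (S : seq T) (v : T) : {set T} :=
  [set w in Nc v | cnt (pre S v) w == 1].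

Definition S1 (S : seq T) : seq T := [seq v <- S | N1 S v != set0].
Definition S2 (S : seq T) : seq T := [seq v <- S | N1 S v == set0].

Definition PS (S : seq T) (u : T) : {set T} :=
  [set v in S2 S | N1 S u :&: N2 S v != set0].

Definition move_after (S : seq T) (u v : T) : seq T :=
  let s := rem u S in
  take (index v s).+1 s ++ u :: drop (index v s).+1 s.

End Graph.

(* Write S = A ++ u :: B ++ v :: C with v = v_u, so that S_{u -> v} = A ++ B ++ v :: u :: C.
   For x <> u the new prefix of x is the old one, minus u exactly when x lies in B ++ [v];
   hence the number of earlier vertices dominating any w can only drop, and it drops by one
   precisely for x in B ++ [v] and w in N[u].  This preserves every DNS condition and every
   first neighbourhood except those of u.  For u itself, the vertex w in N^1_S[u] ∩ N^2_S[v]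
   is dominated once by the new prefix A ++ B ++ [v] of u, exactly as by the old prefix
   A ++ u :: B of v.  A vertex of P' lies in B ++ [v] and has a vertex of N[u] dominated once
   before it, which the move makes new.  Finally S^1 is legal because deleting vertices only
   enlarges first neighbourhoods, and dominating because the first vertex of S dominating w
   has w in its first neighbourhood. *)

From mathcomp Require Import all_boot zify.

Set Implicit Arguments. Unset Strict Implicit. Unset Printing Implicit Defensive.

Lemma notin_uniq_mid (T : eqType) (s1 s2 : seq T) x : uniq (s1 ++ x :: s2) -> x \notin s1.
Proof. by rewrite -cat_rcons cat_uniq rcons_uniq => /andP [/andP []]. Qed.

Lemma index_mid (T : eqType) (s1 s2 : seq T) x :
  x \notin s1 -> index x (s1 ++ x :: s2) = size s1.
Proof. by move=> /negbTE xs1; rewrite index_cat xs1 /= eqxx addn0. Qed.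

Lemma rem_mid (T : eqType) (s1 s2 : seq T) x :
  x \notin s1 -> rem x (s1 ++ x :: s2) = s1 ++ s2.
Proof.
move=> xs1; rewrite remE index_mid // take_size_cat //.
by rewrite -cat_rcons drop_size_cat ?size_rcons.
Qed.

Section Prefix.
Variable T : finType.
Implicit Types (s : seq T) (x y : T).

Lemma pre_cons_eq x s : pre (x :: s) x = [::].
Proof. by rewrite /pre /= eqxx. Qed.

Lemma pre_cons y s x : y != x -> pre (y :: s) x = y :: pre s x.
Proof. by rewrite /pre /= eq_sym => /negbTE ->. Qed.

Lemma pre_cat s1 s2 x :
  pre (s1 ++ s2) x = if x \in s1 then pre s1 x else s1 ++ pre s2 x.
Proof.
rewrite /pre index_cat; case: ifP => [xs1 | _]; rewrite take_cat.
  by rewrite index_mem xs1.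
by rewrite ltnNge leq_addr /= addKn.
Qed.

Lemma pre_mid s1 x s2 : x \notin s1 -> pre (s1 ++ x :: s2) x = s1.
Proof. by move=> /negbTE xs1; rewrite pre_cat xs1 pre_cons_eq cats0. Qed.

Lemma pre_filter (P : pred T) s x : P x -> pre (filter P s) x = filter P (pre s x).
Proof.
move=> Px; elim: s => //= y s IH; case: (eqVneq y x) => [-> | yx].
  by rewrite Px !pre_cons_eq.
by rewrite [in RHS]pre_cons //=; case: (P y); rewrite /= ?pre_cons ?IH.
Qed.

Lemma split_index_lt s x y : y \in s -> index x s < index y s ->
  exists A B C, s = A ++ x :: rcons B y ++ C.
Proof.
move=> ys xy; have xs : x \in s by rewrite -index_mem (leq_trans xy) ?index_size.
have [A [B defA]] : exists A B, pre s y = A ++ x :: B.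
  have : x \in pre s y by rewrite in_take.
  by case/splitPr => A B; exists A, B.
have defs : s = pre s y ++ y :: drop (index y s).+1 s.
  by rewrite /pre -[X in _ ++ X :: _](nth_index y ys) -drop_nth ?index_mem // cat_take_drop.
by exists A, B, (drop (index y s).+1 s); rewrite {1}defs defA cat_rcons -catA.
Qed.

End Prefix.

Section Counting.
Variables (T : finType) (e : rel T).
Implicit Types (S s : seq T) (x w : T).

Lemma cnt_cat s1 s2 w : cnt e (s1 ++ s2) w = cnt e s1 w + cnt e s2 w.
Proof. exact: count_cat. Qed.

Lemma cnt_cons x s w : cnt e (x :: s) w = (w \in Nc e x) + cnt e s w.
Proof. by []. Qed.

Lemma cnt_rcons s x w : cnt e (rcons s x) w = cnt e s w + (w \in Nc e x).
Proof. by rewrite -cats1 cnt_cat /= addn0. Qed.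

Lemma cnt_pre_mono S x y w :
  index x S <= index y S -> cnt e (pre S x) w <= cnt e (pre S y) w.
Proof.
move=> xy; rewrite /pre -(take_takel _ xy) /cnt.
by rewrite -[X in _ <= count _ X](cat_take_drop (index x S)) count_cat leq_addr.
Qed.

Lemma mem_Nc_sym : symmetric e -> forall x w, (w \in Nc e x) = (x \in Nc e w).
Proof. by move=> e_sym x w; rewrite !inE eq_sym e_sym. Qed.

Lemma mem_bigcup_Nc s w : (w \in \bigcup_(x <- s) Nc e x) = (0 < cnt e s w).
Proof.
elim: s => [|x s IH]; first by rewrite big_nil inE.
by rewrite big_cons inE IH cnt_cons; case: (w \in Nc e x).
Qed.

Lemma mem_N1 S x w : (w \in N1 e S x) = (w \in Nc e x) && (cnt e (pre S x) w == 0).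
Proof. by rewrite inE mem_bigcup_Nc lt0n negbK andbC. Qed.

Lemma N1P S x :
  reflect (exists2 w, w \in Nc e x & cnt e (pre S x) w = 0) (N1 e S x != set0).
Proof.
apply: (iffP (set0Pn _)) => [[w] | [w wx cw]]; last by exists w; rewrite mem_N1 wx cw.
by rewrite mem_N1 => /andP [wx /eqP cw]; exists w.
Qed.

Lemma is_DNS_pre S : is_DNS e S <->
  uniq S /\ {in S, forall v, exists2 w, w \in Nc e v & cnt e (pre S v) w <= 1}.
Proof.
split=> [[uS dS] | [uS dS]]; split=> //.
  move=> v vS; case/splitPr: vS uS dS => s1 s2 uS dS.
  by rewrite pre_mid ?(notin_uniq_mid uS) //; apply: (dS _ _ _ erefl).
move=> s1 v s2 defS; have vS : v \in S by rewrite defS mem_cat mem_head orbT.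
by rewrite defS in uS; move: (dS v vS); rewrite defS pre_mid ?(notin_uniq_mid uS).
Qed.

End Counting.

Section FirstNeighbourhoods.
Variables (T : finType) (e : rel T).
Implicit Types (S : seq T) (x w : T).

Lemma legal_of_N1 S : uniq S -> {in S, forall v, N1 e S v != set0} -> is_legal e S.
Proof.
move=> uS N1S; split=> // s1 v s2 defS _.
have vS : v \in S by rewrite defS mem_cat mem_head orbT.
by rewrite defS in uS; move: (N1S v vS); rewrite /N1 defS pre_mid ?(notin_uniq_mid uS).
Qed.

Lemma N1_filter (P : pred T) S x : P x -> N1 e S x \subset N1 e (filter P S) x.
Proof.
move=> Px; apply/subsetP => w; rewrite !mem_N1 pre_filter // => /andP [-> /eqP c0].
by rewrite -leqn0 -c0 /cnt count_filter sub_count // => y /andP [].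
Qed.

Lemma dominating_S1 S : is_dominating e (vset S) -> is_dominating e (vset (S1 e S)).
Proof.
move=> domS w; have [y yS wy] := domS w.
have : has (fun x => w \in Nc e x) S by apply/hasP; exists y; rewrite inE in yS.
case/split_find => x s1 s2 wx s1w; exists x => //.
have xs1 : x \notin s1 by apply: contra s1w => xs1; apply/hasP; exists x.
rewrite inE mem_filter cat_rcons mem_cat mem_head orbT andbT.
apply/N1P; exists w; rewrite // pre_mid //.
by apply/eqP; rewrite -leqn0 leqNgt -has_count.
Qed.

Lemma DDS_dominating S : symmetric e -> is_DDS e S -> is_dominating e (vset S).
Proof.
move=> e_sym [_ cover] w; have /card_gt0P [y] : 0 < #|Nc e w :&: vset S|.
  exact: leq_trans (cover w).
by rewrite inE => /andP [yw yS]; exists y; rewrite // (mem_Nc_sym e_sym).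
Qed.

Lemma S1_dominating_seq S : symmetric e -> is_DDS e S -> is_dominating_seq e (S1 e S).
Proof.
move=> e_sym DDS_S; split; last exact/dominating_S1/DDS_dominating.
apply: legal_of_N1; first exact/filter_uniq/DDS_S.1.1.
move=> v; rewrite mem_filter => /andP [N1v _].
have /set0Pn [w wN1] := N1v; apply/set0Pn; exists w.
exact: subsetP (N1_filter _ N1v) _ wN1.
Qed.

Lemma PS_after S u v : v \in PS e S u -> index u S < index v S.
Proof.
rewrite inE => /andP [_ /set0Pn [w]].
rewrite in_setI mem_N1 => /andP [/andP [_ /eqP cu]].
rewrite inE => /andP [_ /eqP cv].
rewrite ltnNge; apply: contra_eqN cv => /(cnt_pre_mono e w).
by rewrite cu leqn0 => /eqP ->.
Qed.

End FirstNeighbourhoods.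

Section MoveAfter.
Variables (T : finType) (e : rel T) (A B C : seq T) (u v : T).
Local Notation D := (rcons B v).
Local Notation S := (A ++ u :: D ++ C).
Local Notation S' := (A ++ D ++ u :: C).
Hypothesis uS : uniq S.

Lemma perm_move_after : perm_eq S S'.
Proof. by rewrite perm_cat2l -cat1s perm_catCA. Qed.

Let uS' : uniq S'.
Proof. by rewrite -(perm_uniq perm_move_after). Qed.

Let u_notin : u \notin A ++ D.
Proof. by apply: (notin_uniq_mid (s2 := C)); rewrite -catA. Qed.

Let v_notin : v \notin A ++ u :: B.
Proof. by apply: (notin_uniq_mid (s2 := C)); rewrite -catA /= -[B ++ _]cat_rcons. Qed.

Let A_disjoint_D x : x \in A -> x \notin D.
Proof.
move: uS'; rewrite cat_uniq => /and3P [_ /hasPn AD _] xA.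
by apply: contraL xA => xD; apply: AD; rewrite mem_cat xD.
Qed.

Lemma move_after_eq : move_after S u v = S'.
Proof.
have vAB : v \notin A ++ B.
  by apply: contra v_notin; rewrite !mem_cat in_cons orbCA => ->; rewrite orbT.
rewrite /move_after rem_mid ?(notin_uniq_mid uS) // cat_rcons !catA index_mid //.
rewrite -[(A ++ B) ++ _]cat_rcons take_size_cat ?drop_size_cat ?size_rcons //.
by rewrite rcons_cat.
Qed.

Lemma cnt_pre_move_after x w : x != u ->
  cnt e (pre S x) w = (x \in D) && (w \in Nc e u) + cnt e (pre S' x) w.
Proof.
rewrite eq_sym => ux; rewrite !pre_cat !(pre_cons _ ux) pre_cat.
have [xA | _] := boolP (x \in A); first by rewrite (negbTE (A_disjoint_D xA)).
case: (x \in D); rewrite /= !(cnt_cat, cnt_cons); first exact: addnCA.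
by rewrite add0n [(w \in Nc e u) + _]addnCA.
Qed.

Lemma cnt_pre_move_after_u w :
  cnt e (pre S' u) w + (w \in Nc e u) = cnt e (pre S v) w + (w \in Nc e v).
Proof.
have -> : S = (A ++ u :: B) ++ v :: C by rewrite cat_rcons -catA.
rewrite catA (pre_mid _ u_notin) (pre_mid _ v_notin) !(cnt_cat, cnt_cons, cnt_rcons).
lia.
Qed.

Lemma N1_move_after x : x != u -> N1 e S x \subset N1 e S' x.
Proof.
move=> xu; apply/subsetP => w; rewrite !mem_N1 (cnt_pre_move_after w xu).
by case/andP => -> /=; rewrite addn_eq0 => /andP [].
Qed.

Lemma S1_move_after x : x != u -> x \in S1 e S -> x \in S1 e S'.
Proof.
move=> xu; rewrite !mem_filter (perm_mem perm_move_after) => /andP [/set0Pn [w wN1] ->].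
by rewrite andbT; apply/set0Pn; exists w; apply: subsetP (N1_move_after xu) _ wN1.
Qed.

Lemma S1_move_after_block x : x \in D -> x \in PS e S u -> x \in S1 e S'.
Proof.
move=> xD; rewrite inE => /andP [_ /set0Pn [w]].
rewrite in_setI mem_N1 => /andP [/andP [wu _]]; rewrite inE => /andP [wx /eqP cx].
have xu : x != u by apply: contraNneq u_notin => <-; rewrite mem_cat xD orbT.
rewrite mem_filter !mem_cat xD orbT andbT; apply/N1P; exists w => //.
by move: cx; rewrite (cnt_pre_move_after w xu) xD wu => /eqP; rewrite eqSS => /eqP.
Qed.

Lemma DNS_move_after : is_DNS e S -> N1 e S u :&: N2 e S v != set0 -> is_DNS e S'.
Proof.
rewrite !is_DNS_pre => -[_ DNS_S] /set0Pn [w].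
rewrite in_setI mem_N1 => /andP [/andP [wu _]]; rewrite inE => /andP [wv /eqP cv].
split=> // x xS'.
have [-> | xu] := eqVneq x u.
  exists w => //; have := cnt_pre_move_after_u w; rewrite cv wu wv.
  by move/eqP; rewrite eqn_add2r => /eqP ->.
have [w' w'x cw'] : exists2 w', w' \in Nc e x & cnt e (pre S x) w' <= 1.
  by apply: DNS_S; rewrite (perm_mem perm_move_after).
by exists w' => //; apply: leq_trans cw'; rewrite (cnt_pre_move_after w' xu) leq_addl.
Qed.

Lemma mem_move_after_block x : index u S < index x S <= index v S -> x \in D.
Proof.
have defS : S = (A ++ u :: B) ++ v :: C by rewrite cat_rcons -catA.
case/andP => ux xv; have xS : x \in S.
  by rewrite -index_mem (leq_ltn_trans xv) // index_mem defS mem_cat mem_head orbT.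
have : x \notin take (index u S).+1 S by rewrite in_take // ltnS -ltnNge.
rewrite index_mid ?(notin_uniq_mid uS) // -cat_rcons take_size_cat ?size_rcons //.
have : x \in take (index v S).+1 S by rewrite in_take.
rewrite defS index_mid // -[(A ++ u :: B) ++ _]cat_rcons.
rewrite take_size_cat ?size_rcons // rcons_cat /=.
rewrite mem_cat in_cons [x \in rcons A u]mem_rcons in_cons.
by case/or3P => [xA | xu | //]; rewrite ?xA ?xu ?orbT.
Qed.

End MoveAfter.

Theorem lemma1 (T : finType) (e : rel T)
  (e_sym : symmetric e) (e_irr : irreflexive e)
  (noiso : no_isolated e) (S : seq T) (hS : is_DDS e S)
  (u : T) (hu : u \in S) (hP : PS e S u != set0)
  (vu : T) (hvu : vu \in PS e S u) :
  let P' := [set v in PS e S u | index v S <= index vu S] in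
  let S' := move_after S u vu in
  [/\ is_dominating_seq e (S1 e S),
      is_DDS e S' /\ vset S' = vset S,
      (is_GDDS e S -> is_GDDS e S') &
      P' :|: (vset (S1 e S) :\ u) \subset vset (S1 e S')].
Proof.
move=> P' S'; have [[uS DNS_S] cover] := hS.
have vuS : vu \in S by move: hvu; rewrite inE mem_filter => /andP [/andP [_ ->]].
have [A [B [C defS]]] := split_index_lt vuS (PS_after hvu).
rewrite {}defS in uS DNS_S cover hvu P' S' *.
rewrite /S' move_after_eq //; have perm_S := perm_move_after A B C u vu.
have vset_S' : vset (A ++ rcons B vu ++ u :: C) = vset (A ++ u :: rcons B vu ++ C).
  by apply/setP => x; rewrite !inE (perm_mem perm_S).
have DDS_S' : is_DDS e (A ++ rcons B vu ++ u :: C).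
  split; last by move=> w; rewrite vset_S'.
  by apply: DNS_move_after => //; move: hvu; rewrite inE => /andP [].
split=> //; first exact: S1_dominating_seq.
  by case=> _ maxS; split=> // S'' /maxS; rewrite (perm_size perm_S).
apply/subsetP => x; rewrite in_setU /vset in_set => /orP [].
  rewrite /P' in_set => /andP [xPS xvu].
  have xD : x \in rcons B vu.
    by apply: (mem_move_after_block uS); rewrite (PS_after xPS) xvu.
  exact: S1_move_after_block xD xPS.
by rewrite in_setD1 in_set => /andP [xu xS1]; apply: S1_move_after.
Qed.
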